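(* Let $n\ge 1$, $p\in\{0,\dots,n\}$, $\mathcal{X}=\{x\in\{0,1\}^n:\sum_{i=1}^n x_i=p\}$ (the minimum selection problem), $\hat c\in\mathbb{R}^n_{\ge0}$, and fix $\lambda\in[0,1]$. Let $\mathcal{U}=\prod_{i=1}^n[(1-\lambda)\hat c_i,(1+\lambda)\hat c_i]$. Then a nominal solution $\hat x$ (a minimizer of $\hat c^tx$ over $\mathcal{X}$) is an optimal solution of the min-max regret selection problem \[ \min_{x\in\mathcal{X}}\ \max_{c\in\mathcal{U}}\Big(c^tx-\min_{y\in\mathcal{X}}c^ty\Big). \] *)

From HB Require Import structures.
From mathcomp Require Import all_boot all_order all_algebra.
From mathcomp Require Import all_classical all_reals.
Unset Strict Implicit. Unset Printing Implicit Defensive.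
Import Order.TTheory GRing.Theory Num.Theory.
Local Open Scope classical_set_scope.
Local Open Scope ring_scope.

Definition selection (n p : nat) : set {ffun 'I_n -> bool} :=
  [set x : {ffun 'I_n -> bool} | (\sum_(i < n) nat_of_bool (x i))%N = p].

Definition cost (R : realType) (n : nat) (c : 'I_n -> R) (x : {ffun 'I_n -> bool}) : R :=
  \sum_(i < n) c i * (x i)%:R.

Definition unc_set (R : realType) (n : nat) (lam : R) (ch : 'I_n -> R) : set ('I_n -> R) :=
  [set c | forall i, (1 - lam) * ch i <= c i /\ c i <= (1 + lam) * ch i].

(* min_{y in X} c^t y (a finite nonempty set when p <= n: inf = min). *)
Definition opt_value (R : realType) (n p : nat) (c : 'I_n -> R) : R :=
  inf [set cost R n c y | y in selection n p].

(* max_{c in U} (c^t x - min_{y in X} c^t y) (the max is attained: sup = max). *)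
Definition max_regret (R : realType) (n p : nat) (lam : R) (ch : 'I_n -> R)
    (x : {ffun 'I_n -> bool}) : R :=
  sup [set cost R n c x - opt_value R n p c | c in unc_set R n lam ch].

Definition nominal (R : realType) (n p : nat) (ch : 'I_n -> R) (xh : {ffun 'I_n -> bool}) :=
  selection n p xh /\ forall y, selection n p y -> cost R n ch xh <= cost R n ch y.

From HB Require Import structures.
From mathcomp Require Import all_boot all_order all_algebra.
From mathcomp Require Import all_classical all_reals.
From mathcomp Require Import perm lra.
Import Order.TTheory GRing.Theory Num.Theory.
Local Open Scope classical_set_scope.
Local Open Scope ring_scope.

(* Exchange argument.  If a feasible x differs from the nominal solution xh,
   pick i in xh \ x and j in x \ xh; optimality of xh gives ch i <= ch j.
   Exchanging j for i in x does not increase the max regret: for any scenario c,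
   the regret of the exchanged solution under c is at most the regret of x under
   the scenario c' that agrees with c except c' j = (1 + lam) ch j and
   c' i = (1 - lam) ch i, since any competitor z under c is matched by z with i
   and j exchanged under c'.  Each exchange shrinks x \ xh, so iterating turns x
   into xh without increasing the max regret. *)

Definition permute {n} (x : {ffun 'I_n -> bool}) (s : {perm 'I_n}) : {ffun 'I_n -> bool} :=
  [ffun k => x (s k)].

Definition regret (R : realType) n p (c : 'I_n -> R) (x : {ffun 'I_n -> bool}) : R :=
  cost R n c x - opt_value R n p c.

Section Selection.
Context {n p : nat}.
Implicit Types (x y : {ffun 'I_n -> bool}) (s : {perm 'I_n}).

Lemma selection_card x : selection n p x -> #|[pred k | x k]| = p.
Proof.
move=> <-; rewrite -sum1_card big_mkcond.
by apply: eq_bigr => k _; rewrite inE; case: (x k).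
Qed.

Lemma selection_permute x s : selection n p x -> selection n p (permute x s).
Proof.
rewrite /selection /= => <-; rewrite (reindex_inj (@perm_inj _ s^-1%g)) /=.
by apply: eq_bigr => k _; rewrite ffunE permKV.
Qed.

Lemma selection_diff x y : selection n p x -> selection n p y -> x != y ->
  exists2 k, x k & ~~ y k.
Proof.
move=> /selection_card sx /selection_card sy neq_xy.
have [k /andP[xk yk] | x_sub_y] := pickP (fun k => x k && ~~ y k); first by exists k.
case/eqP: neq_xy; apply/ffunP => k.
have /subset_cardP eq_xy : #|[pred k | x k]| = #|[pred k | y k]| by rewrite sx sy.
have /eq_xy/(_ k) : [pred k | x k] \subset [pred k | y k].
  apply/fintype.subsetP => i; rewrite !inE => xi.
  by have := x_sub_y i; rewrite /= xi; case: (y i).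
by rewrite !inE.
Qed.

Lemma card_permute_exchange_lt x y i j : y i -> ~~ x i -> x j -> ~~ y j ->
  (#|[pred k | permute x (tperm i j) k && ~~ y k]| < #|[pred k | x k && ~~ y k]|)%N.
Proof.
move=> yi xi xj yj; apply/proper_card/properP; split.
  apply/fintype.subsetP => k; rewrite !inE ffunE.
  case: tpermP => [->|->|_ _] //; first by rewrite yi andbF.
  by rewrite (negbTE xi).
by exists j; rewrite !inE ?ffunE ?tpermR ?xj ?yj // (negbTE xi).
Qed.

End Selection.

Section Cost.
Context {R : realType} {n : nat}.
Implicit Types (c d : 'I_n -> R) (x w : {ffun 'I_n -> bool}) (s : {perm 'I_n}).

Lemma cost_permute c x s : cost R n c (permute x s) = cost R n (c \o s^-1%g) x.
Proof.
rewrite /cost (reindex_inj (@perm_inj _ s^-1%g)) /=.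
by apply: eq_bigr => k _; rewrite ffunE permKV.
Qed.

Lemma cost_exchange c x i j : x i -> ~~ x j ->
  cost R n c (permute x (tperm i j)) = cost R n c x - c i + c j.
Proof.
move=> xi xj; have neq_ij : i != j by apply: contraNneq xj => <-.
suff : cost R n (c \o tperm i j) x - cost R n c x = c j - c i.
  by rewrite cost_permute tpermV; lra.
rewrite /cost -sumrB (bigD1 i) // (bigD1 j) 1?eq_sym //= big1 => [|k /andP[ki kj]].
  by rewrite tpermL tpermR xi (negbTE xj) /=; lra.
by rewrite tpermD 1?eq_sym // subrr.
Qed.

Lemma ler_cost_diff c d x w :
  (forall k, (c k - d k) * (w k)%:R <= (c k - d k) * (x k)%:R) ->
  cost R n c w - cost R n d w <= cost R n c x - cost R n d x.
Proof. by move=> le_cd; rewrite /cost -!sumrB; apply: ler_sum => k _; rewrite -!mulrBl. Qed.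

Lemma ler_norm_cost c x : `|cost R n c x| <= \sum_k `|c k|.
Proof.
apply: le_trans (ler_norm_sum _ _ _) _; apply: ler_sum => k _.
by rewrite normrM; case: (x k); rewrite ?normr1 ?normr0 ?mulr1 ?mulr0.
Qed.

Context {p : nat}.

Lemma opt_value_le_cost c y : selection n p y -> opt_value R n p c <= cost R n c y.
Proof.
move=> sy; apply: ge_inf; last by exists y.
exists (- \sum_k `|c k|) => _ [z _ <-].
by have := ler_norm_cost c z; rewrite ler_norml => /andP[].
Qed.

Lemma lb_le_opt_value c y m : selection n p y ->
  (forall z, selection n p z -> m <= cost R n c z) -> m <= opt_value R n p c.
Proof.
move=> sy le_m; apply: lb_le_inf; first by exists (cost R n c y), y.
by move=> _ [z sz <-]; apply: le_m.
Qed.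

Lemma regret_le_sum_norm c x : selection n p x -> regret R n p c x <= (\sum_k `|c k|) *+ 2.
Proof.
move=> sx; have := ler_norm_cost c x; rewrite ler_norml => /andP[_ le_cost].
have le_opt : - \sum_k `|c k| <= opt_value R n p c.
  apply: (lb_le_opt_value c x) => // z _.
  by have := ler_norm_cost c z; rewrite ler_norml => /andP[].
by rewrite /regret mulr2n; lra.
Qed.

Lemma nominal_exchange_le ch xh i j : nominal R n p ch xh -> xh i -> ~~ xh j ->
  ch i <= ch j.
Proof.
move=> [sxh xh_min] xhi xhj.
have := xh_min _ (selection_permute xh (tperm i j) sxh).
by rewrite cost_exchange //; lra.
Qed.

End Cost.

Section Regret.
Context {R : realType} {n p : nat} {lam : R} {ch : 'I_n -> R}.
Hypotheses (ch_ge0 : forall k, 0 <= ch k) (lam_ge0 : 0 <= lam) (lam_le1 : lam <= 1).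

Lemma unc_set_ge0 c : unc_set R n lam ch c -> forall k, 0 <= c k.
Proof.
move=> Uc k; have [lb _] := Uc k; apply: le_trans lb.
by rewrite mulr_ge0 ?subr_ge0.
Qed.

Lemma unc_set_nominal : unc_set R n lam ch ch.
Proof. by move=> k; move: (ch_ge0 k) lam_ge0; split; nra. Qed.

Lemma regret_le_max_regret c x : selection n p x -> unc_set R n lam ch c ->
  regret R n p c x <= max_regret R n p lam ch x.
Proof.
move=> sx Uc; apply: ub_le_sup; last by exists c.
exists ((\sum_k (1 + lam) * ch k) *+ 2) => _ [d Ud <-].
apply: le_trans (regret_le_sum_norm d x sx) _.
rewrite lerMn2r /=; apply: ler_sum => k _.
by rewrite ger0_norm ?(unc_set_ge0 d Ud) //; case: (Ud k).
Qed.

Lemma max_regret_le_ub x m : (forall c, unc_set R n lam ch c -> regret R n p c x <= m) ->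
  max_regret R n p lam ch x <= m.
Proof.
move=> le_m; apply: ge_sup; first by exists (regret R n p ch x), ch; first exact: unc_set_nominal.
by move=> _ [c Uc <-]; apply: le_m.
Qed.

Lemma max_regret_exchange x i j : selection n p x -> ~~ x i -> x j -> ch i <= ch j ->
  max_regret R n p lam ch (permute x (tperm i j)) <= max_regret R n p lam ch x.
Proof.
move=> sx xi xj le_ij; have neq_ij : i != j by apply: contraNneq xi => ->.
apply: max_regret_le_ub => c Uc.
pose c' k := if k == j then (1 + lam) * ch j else if k == i then (1 - lam) * ch i else c k.
have Uc' : unc_set R n lam ch c'.
  move=> k; rewrite /c'; case: eqP => [->|_].
    by have [lo hi] := unc_set_nominal j; split; lra.
  case: eqP => [->|_]; last exact: Uc.
  by have [lo hi] := unc_set_nominal i; split; lra.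
apply: le_trans (regret_le_max_regret c' x sx Uc').
set cτ := c \o tperm i j.
have cost_c z : cost R n c z = cost R n cτ (permute z (tperm i j)).
  by rewrite cost_permute tpermV /cost; apply: eq_bigr => k _; rewrite /cτ /= tpermK.
suff : opt_value R n p c' - (cost R n c' x - cost R n cτ x) <= opt_value R n p c.
  by rewrite /regret cost_permute tpermV; lra.
apply: (lb_le_opt_value c x) => // z sz; rewrite cost_c.
have := opt_value_le_cost c' _ (selection_permute z (tperm i j) sz).
suff : cost R n c' (permute z (tperm i j)) - cost R n cτ (permute z (tperm i j)) <=
  cost R n c' x - cost R n cτ x by lra.
apply: ler_cost_diff => k; rewrite /c' /cτ /=.
have [[_ ci_le] [cj_ge _]] := (Uc i, Uc j).
have ci_le_j : c i <= (1 + lam) * ch j by move: lam_ge0; nra.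
have cj_ge_i : (1 - lam) * ch i <= c j by move: lam_le1; nra.
case: (eqVneq k j) => [->|nkj].
  by rewrite tpermR xj; case: (permute z _ j) => /=; lra.
case: (eqVneq k i) => [->|nki].
  by rewrite tpermL (negbTE xi); case: (permute z _ i) => /=; lra.
by rewrite tpermD 1?eq_sym // subrr !mul0r.
Qed.

End Regret.

Theorem theorem3 (R : realType) (n p : nat) (ch : 'I_n -> R) (lam : R)
    (xh : {ffun 'I_n -> bool}) :
  (1 <= n)%N -> (p <= n)%N ->
  (forall i, 0 <= ch i) -> 0 <= lam -> lam <= 1 ->
  nominal R n p ch xh ->
  forall x, selection n p x -> max_regret R n p lam ch xh <= max_regret R n p lam ch x.
Proof.
move=> _ _ ch_ge0 lam_ge0 lam_le1 nom_xh x; have [sxh _] := nom_xh.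
have [m] := ubnP #|[pred k | x k && ~~ xh k]|; elim: m x => // m IH x lt_m sx.
have [-> // | neq_x_xh] := eqVneq x xh.
have [j xj xhj] := selection_diff x xh sx sxh neq_x_xh.
have [i xhi xi] : exists2 i, xh i & ~~ x i by apply: (selection_diff xh x sxh sx); rewrite eq_sym.
have le_ij : ch i <= ch j := nominal_exchange_le ch xh i j nom_xh xhi xhj.
apply: le_trans (max_regret_exchange ch_ge0 lam_ge0 lam_le1 x i j sx xi xj le_ij).
apply: IH (selection_permute x (tperm i j) sx).
by apply: leq_trans (card_permute_exchange_lt x xh i j xhi xi xj xhj) _; rewrite -ltnS.
Qed.
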